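(* Let $c$ be a statement and $s$ a state. If $((\mathit{Loc}\ c\ \mathit{PTop},\mathit{True}),s) \rightarrow^* (cf',s')$ in the small-step semantics, then there exist a syntactic configuration $cfa'$ and a state $sa'$ such that $\mathit{stmt\_to\_ta}\ c \vdash (\mathit{init\_s}(\mathit{stmt\_to\_ta}\ c), s) \rightarrow^* (cfa',sa')$ and $(cf',s') \approx (cfa',sa')$.
   Context: Syntax. Values: $\mathit{val} ::= \mathit{Bool}\ b \mid \mathit{Null}$. Expressions: $\mathit{expr} ::= \mathit{Val}\ v \mid \mathit{Var}\ x$. Statements: $\mathit{stmt} ::= \mathit{Empty} \mid \mathit{Assign}\ x\ v \mid \mathit{Seq}\ c_1\ c_2 \mid \mathit{Cond}\ e\ c_1\ c_2 \mid \mathit{While}\ e\ c$. Statement paths: $\mathit{stmt\_path} ::= \mathit{PTop} \mid \mathit{PSeqLeft}\ sp\ c_2 \mid \mathit{PSeqRight}\ c_1\ sp \mid \mathit{PCondLeft}\ e\ sp\ c_2 \mid \mathit{PCondRight}\ e\ c_1\ sp \mid \mathit{PWhile}\ e\ sp$. A location is $\mathit{Loc}\ c\ sp$; a syntactic configuration is a pair (location, Boolean). A state maps variable names to $\mathit{Some}\ v$ or $\mathit{None}$; $s(x\mapsto v)$ updates $x$ to $\mathit{Some}\ v$. $\mathit{eval}(\mathit{Val}\ v)\ s=v$; $\mathit{eval}(\mathit{Var}\ x)\ s=v$ if $s\,x=\mathit{Some}\ v$, else $\mathit{Null}$. Next location: $\mathit{next\_loc}\ c\ \mathit{PTop} = (\mathit{Loc}\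 c\ \mathit{PTop}, \mathit{False})$; $\mathit{next\_loc}\ c\ (\mathit{PSeqLeft}\ sp\ c_2) = (\mathit{Loc}\ c_2\ (\mathit{PSeqRight}\ c\ sp), \mathit{True})$; $\mathit{next\_loc}\ c\ (\mathit{PSeqRight}\ c_1\ sp) = (\mathit{Loc}\ (\mathit{Seq}\ c_1\ c)\ sp, \mathit{False})$; $\mathit{next\_loc}\ c\ (\mathit{PCondLeft}\ e\ sp\ c_2) = (\mathit{Loc}\ (\mathit{Cond}\ e\ c\ c_2)\ sp, \mathit{False})$; $\mathit{next\_loc}\ c\ (\mathit{PCondRight}\ e\ c_1\ sp) = (\mathit{Loc}\ (\mathit{Cond}\ e\ c_1\ c)\ sp, \mathit{False})$; $\mathit{next\_loc}\ c\ (\mathit{PWhile}\ e\ sp) = (\mathit{Loc}\ (\mathit{While}\ e\ c)\ sp, \mathit{True})$. Small-step semantics $\rightarrow$ on pairs (syntactic configuration, state), least relation with: $((\mathit{Loc}\ \mathit{Empty}\ sp,\mathit{True}),s)\rightarrow((\mathit{Loc}\ \mathit{Empty}\ sp,\mathit{False}),s)$; $((\mathit{Loc}\ (\mathit{Assign}\ x\ v)\ sp,\mathit{True}),s)\rightarrow((\mathit{Loc}\ (\mathit{Assign}\ x\ v)\ sp,\mathit{False}),s(x\mapsto v))$; $((\mathit{Loc}\ (\mathit{Seq}\ c_1\ c_2)\ sp,\mathit{True}),s)\rightarrow((\mathit{Loc}\ c_1\ (\mathit{PSeqLeft}\ sp\ c_2),\mathit{True}),s)$; if $\mathit{eval}\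 e\ s=\mathit{Bool}\ \mathit{True}$: $((\mathit{Loc}\ (\mathit{Cond}\ e\ c_1\ c_2)\ sp,\mathit{True}),s)\rightarrow((\mathit{Loc}\ c_1\ (\mathit{PCondLeft}\ e\ sp\ c_2),\mathit{True}),s)$; if $\mathit{eval}\ e\ s=\mathit{Bool}\ \mathit{False}$: $((\mathit{Loc}\ (\mathit{Cond}\ e\ c_1\ c_2)\ sp,\mathit{True}),s)\rightarrow((\mathit{Loc}\ c_2\ (\mathit{PCondRight}\ e\ c_1\ sp),\mathit{True}),s)$; if $\mathit{eval}\ e\ s=\mathit{Bool}\ \mathit{True}$: $((\mathit{Loc}\ (\mathit{While}\ e\ c)\ sp,\mathit{True}),s)\rightarrow((\mathit{Loc}\ c\ (\mathit{PWhile}\ e\ sp),\mathit{True}),s)$; if $\mathit{eval}\ e\ s=\mathit{Bool}\ \mathit{False}$: $((\mathit{Loc}\ (\mathit{While}\ e\ c)\ sp,\mathit{True}),s)\rightarrow((\mathit{Loc}\ (\mathit{While}\ e\ c)\ sp,\mathit{False}),s)$; if $sp\neq\mathit{PTop}$: $((\mathit{Loc}\ c\ sp,\mathit{False}),s)\rightarrow(\mathit{next\_loc}\ c\ sp,s)$. $\rightarrow^*$ is its reflexive-transitive closure. Automata: actions $\mathit{NoAct}$, $\mathit{AssAct}\ x\ v$ with $\mathit{action\_effect}\ \mathit{NoAct}\ s=s$, $\mathit{action\_effect}(\mathit{AssAct}\ x\ v)\ s=s(x\mapsto v)$; an edge is a record $(\mathit{source},\mathit{action},\mathit{dest})$; an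 automaton has a node list $\mathit{nodes}$, edge list $\mathit{edges}$, initial node $\mathit{init\_s}$. $\mathit{aut}\vdash(l,s)\rightarrow(l',s')$ iff some $e\in\mathit{edges}(\mathit{aut})$ has $\mathit{source}\ e=l$, $\mathit{dest}\ e=l'$, $s'=\mathit{action\_effect}(\mathit{action}\ e)\ s$; $\rightarrow^*$ is the reflexive-transitive closure. $\mathit{all\_locations}\ c\ sp$: contains $\mathit{Loc}\ c\ sp$, plus for $c=\mathit{Seq}\ c_1\ c_2$ the elements of $\mathit{all\_locations}\ c_1\ (\mathit{PSeqLeft}\ sp\ c_2)$ and $\mathit{all\_locations}\ c_2\ (\mathit{PSeqRight}\ c_1\ sp)$; for $c=\mathit{Cond}\ e\ c_1\ c_2$ those of $\mathit{all\_locations}\ c_1\ (\mathit{PCondLeft}\ e\ sp\ c_2)$ and $\mathit{all\_locations}\ c_2\ (\mathit{PCondRight}\ e\ c_1\ sp)$; for $c=\mathit{While}\ e\ c'$ those of $\mathit{all\_locations}\ c'\ (\mathit{PWhile}\ e\ sp)$; nothing else. $\mathit{nodes\_of\_stmt\_locations}$ pairs each location with both $\mathit{True}$ and $\mathit{False}$. $\mathit{synt\_step\_image}$: $(\mathit{Loc}\ \mathit{Empty}\ sp,\mathit{True})\mapsto[(\mathit{Loc}\ \mathit{Empty}\ sp,\mathit{False})]$; $(\mathit{Loc}\ (\mathit{Assign}\ x\ v)\ sp,\mathit{True})\mapsto[(\mathit{Loc}\ (\mathit{Assign}\ x\ v)\ sp,\mathit{False})]$; $(\mathit{Loc}\ (\mathit{Seq}\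 c_1\ c_2)\ sp,\mathit{True})\mapsto[(\mathit{Loc}\ c_1\ (\mathit{PSeqLeft}\ sp\ c_2),\mathit{True})]$; $(\mathit{Loc}\ (\mathit{Cond}\ e\ c_1\ c_2)\ sp,\mathit{True})\mapsto[(\mathit{Loc}\ c_1\ (\mathit{PCondLeft}\ e\ sp\ c_2),\mathit{True}),(\mathit{Loc}\ c_2\ (\mathit{PCondRight}\ e\ c_1\ sp),\mathit{True})]$; $(\mathit{Loc}\ (\mathit{While}\ e\ c)\ sp,\mathit{True})\mapsto[(\mathit{Loc}\ c\ (\mathit{PWhile}\ e\ sp),\mathit{True}),(\mathit{Loc}\ (\mathit{While}\ e\ c)\ sp,\mathit{False})]$; $(\mathit{Loc}\ c\ sp,\mathit{False})\mapsto[\,]$ if $sp=\mathit{PTop}$, else $[\mathit{next\_loc}\ c\ sp]$. $\mathit{action\_of\_synt\_config}(\mathit{Loc}\ (\mathit{Assign}\ x\ v)\ sp,\mathit{True})=\mathit{AssAct}\ x\ v$, $\mathit{NoAct}$ otherwise. $\mathit{stmt\_to\_ta}\ c$ is the automaton with $\mathit{nodes}=nds:=\mathit{nodes\_of\_stmt\_locations}(\mathit{all\_locations}\ c\ \mathit{PTop})$, edges the list of all $(\mathit{source}=n,\mathit{action}=\mathit{action\_of\_synt\_config}\ n,\mathit{dest}=t)$ with $n\in nds$ and $t\in\mathit{synt\_step\_image}\ n$, and $\mathit{init\_s}=(\mathit{Loc}\ c\ \mathit{PTop},\mathit{True})$. The relation $\approx$ between (syntactic configuration, state) pairs is equality. 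*)

From Stdlib Require Import String List Relations.
Import ListNotations.

Definition vname := string.

Inductive val : Type := Bool (b : bool) | Null.

Inductive expr : Type := Val (v : val) | Var (x : vname).

Inductive stmt : Type :=
| Empty
| Assign (x : vname) (v : val)
| Seq (c1 c2 : stmt)
| Cond (e : expr) (c1 c2 : stmt)
| While (e : expr) (c : stmt).

Inductive stmt_path : Type :=
| PTop
| PSeqLeft (sp : stmt_path) (c2 : stmt)
| PSeqRight (c1 : stmt) (sp : stmt_path)
| PCondLeft (e : expr) (sp : stmt_path) (c2 : stmt)
| PCondRight (e : expr) (c1 : stmt) (sp : stmt_path)
| PWhile (e : expr) (sp : stmt_path).

Inductive location : Type := Loc (c : stmt) (sp : stmt_path).

Definition synt_config : Type := (location * bool)%type.

Definition state : Type := vname -> option val.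

Definition update (s : state) (x : vname) (v : val) : state :=
  fun y => if String.eqb y x then Some v else s y.

Definition eval (e : expr) (s : state) : val :=
  match e with
  | Val v => v
  | Var x => match s x with Some v => v | None => Null end
  end.

Definition next_loc (c : stmt) (sp : stmt_path) : synt_config :=
  match sp with
  | PTop => (Loc c PTop, false)
  | PSeqLeft sp' c2 => (Loc c2 (PSeqRight c sp'), true)
  | PSeqRight c1 sp' => (Loc (Seq c1 c) sp', false)
  | PCondLeft e sp' c2 => (Loc (Cond e c c2) sp', false)
  | PCondRight e c1 sp' => (Loc (Cond e c1 c) sp', false)
  | PWhile e sp' => (Loc (While e c) sp', true)
  end.

Inductive small_step : synt_config * state -> synt_config * state -> Prop :=
| StEmpty sp s :
    small_step ((Loc Empty sp, true), s) ((Loc Empty sp, false), s)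
| StAssign x v sp s :
    small_step ((Loc (Assign x v) sp, true), s)
               ((Loc (Assign x v) sp, false), update s x v)
| StSeq c1 c2 sp s :
    small_step ((Loc (Seq c1 c2) sp, true), s)
               ((Loc c1 (PSeqLeft sp c2), true), s)
| StCondT e c1 c2 sp s :
    eval e s = Bool true ->
    small_step ((Loc (Cond e c1 c2) sp, true), s)
               ((Loc c1 (PCondLeft e sp c2), true), s)
| StCondF e c1 c2 sp s :
    eval e s = Bool false ->
    small_step ((Loc (Cond e c1 c2) sp, true), s)
               ((Loc c2 (PCondRight e c1 sp), true), s)
| StWhileT e c sp s :
    eval e s = Bool true ->
    small_step ((Loc (While e c) sp, true), s)
               ((Loc c (PWhile e sp), true), s)
| StWhileF e c sp s :
    eval e s = Bool false ->
    small_step ((Loc (While e c) sp, true), s)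
               ((Loc (While e c) sp, false), s)
| StNext c sp s :
    sp <> PTop ->
    small_step ((Loc c sp, false), s) (next_loc c sp, s).

Definition small_steps := clos_refl_trans _ small_step.

Inductive action : Type := NoAct | AssAct (x : vname) (v : val).

Definition action_effect (a : action) (s : state) : state :=
  match a with
  | NoAct => s
  | AssAct x v => update s x v
  end.

Record edge : Type := mkEdge {
  source : synt_config;
  act : action;
  dest : synt_config }.

Record ta : Type := mkTA {
  nodes : list synt_config;
  edges : list edge;
  init_s : synt_config }.

Definition ta_step (aut : ta) (p q : synt_config * state) : Prop :=
  exists e, In e (edges aut) /\ source e = fst p /\ dest e = fst q /\
            snd q = action_effect (act e) (snd p).

Definition ta_steps (aut : ta) := clos_refl_trans _ (ta_step aut).

Fixpoint all_locations (c : stmt) (sp : stmt_path) : list location :=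
  Loc c sp ::
  match c with
  | Seq c1 c2 => all_locations c1 (PSeqLeft sp c2) ++ all_locations c2 (PSeqRight c1 sp)
  | Cond e c1 c2 => all_locations c1 (PCondLeft e sp c2) ++ all_locations c2 (PCondRight e c1 sp)
  | While e c' => all_locations c' (PWhile e sp)
  | _ => []
  end.

Definition nodes_of_stmt_locations (ls : list location) : list synt_config :=
  flat_map (fun l => [(l, true); (l, false)]) ls.

Definition synt_step_image (n : synt_config) : list synt_config :=
  match n with
  | (Loc Empty sp, true) => [(Loc Empty sp, false)]
  | (Loc (Assign x v) sp, true) => [(Loc (Assign x v) sp, false)]
  | (Loc (Seq c1 c2) sp, true) => [(Loc c1 (PSeqLeft sp c2), true)]
  | (Loc (Cond e c1 c2) sp, true) =>
      [(Loc c1 (PCondLeft e sp c2), true); (Loc c2 (PCondRight e c1 sp), true)]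
  | (Loc (While e c) sp, true) =>
      [(Loc c (PWhile e sp), true); (Loc (While e c) sp, false)]
  | (Loc c sp, false) =>
      match sp with PTop => [] | _ => [next_loc c sp] end
  end.

Definition action_of_synt_config (n : synt_config) : action :=
  match n with
  | (Loc (Assign x v) _, true) => AssAct x v
  | _ => NoAct
  end.

Definition stmt_to_ta (c : stmt) : ta :=
  let nds := nodes_of_stmt_locations (all_locations c PTop) in
  mkTA nds
       (flat_map (fun n => map (fun t => mkEdge n (action_of_synt_config n) t)
                              (synt_step_image n)) nds)
       (Loc c PTop, true).

Definition sim_rel (p q : synt_config * state) : Prop := p = q.

(* Every location reached from [Loc c PTop] reassembles, by plugging its
   statement back into its path, to [c]; hence it is one of the locations
   enumerated by [all_locations c PTop].  A small step from such a
   configuration is mirrored by an edge of [stmt_to_ta c] whose action has the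
   same effect on the state, so the automaton simulates the semantics step by
   step with the identity as simulation relation. *)
From Stdlib Require Import List Relations.

Fixpoint plug (c : stmt) (sp : stmt_path) : stmt :=
  match sp with
  | PTop => c
  | PSeqLeft sp' c2 => plug (Seq c c2) sp'
  | PSeqRight c1 sp' => plug (Seq c1 c) sp'
  | PCondLeft e sp' c2 => plug (Cond e c c2) sp'
  | PCondRight e c1 sp' => plug (Cond e c1 c) sp'
  | PWhile e sp' => plug (While e c) sp'
  end.

Definition plug_config (n : synt_config) : stmt :=
  match n with (Loc c sp, _) => plug c sp end.

Lemma in_all_locations_self (c : stmt) (sp : stmt_path) :
  In (Loc c sp) (all_locations c sp).
Proof. destruct c; left; reflexivity. Qed.

Lemma all_locations_incl (r : stmt) (q : stmt_path) (c : stmt) (sp : stmt_path) :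
  In (Loc c sp) (all_locations r q) ->
  incl (all_locations c sp) (all_locations r q).
Proof.
  revert q; induction r; intros q [Heq | Hin]; try (injection Heq; intros; subst; apply incl_refl);
    simpl in Hin; try contradiction; intros l Hl; right.
  - apply in_app_or in Hin as [Hin | Hin]; apply in_or_app;
      [left; exact (IHr1 _ Hin l Hl) | right; exact (IHr2 _ Hin l Hl)].
  - apply in_app_or in Hin as [Hin | Hin]; apply in_or_app;
      [left; exact (IHr1 _ Hin l Hl) | right; exact (IHr2 _ Hin l Hl)].
  - exact (IHr _ Hin l Hl).
Qed.

Lemma in_all_locations_plug (sp : stmt_path) (c : stmt) :
  In (Loc c sp) (all_locations (plug c sp) PTop).
Proof.
  revert c; induction sp; intros c; simpl; try apply in_all_locations_self;
    apply (all_locations_incl _ _ _ _ (IHsp _)); right;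
    try apply in_or_app; auto using in_all_locations_self.
Qed.

Lemma in_nodes_stmt_to_ta (n : synt_config) :
  In n (nodes (stmt_to_ta (plug_config n))).
Proof.
  destruct n as [[c sp] b]; apply in_flat_map; exists (Loc c sp).
  split; [apply in_all_locations_plug | destruct b; simpl; auto].
Qed.

Lemma ta_step_stmt_to_ta (n m : synt_config) (s : state) :
  In m (synt_step_image n) ->
  ta_step (stmt_to_ta (plug_config n)) (n, s)
          (m, action_effect (action_of_synt_config n) s).
Proof.
  intros Hm; exists (mkEdge n (action_of_synt_config n) m).
  repeat split; apply in_flat_map; exists n.
  split; [apply in_nodes_stmt_to_ta | apply in_map, Hm].
Qed.

Lemma small_step_synt_step_image (n m : synt_config) (s s' : state) :
  small_step (n, s) (m, s') ->
  In m (synt_step_image n) /\ s' = action_effect (action_of_synt_config n) s.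
Proof.
  inversion 1; subst; simpl; auto.
  destruct sp; try congruence; destruct c; simpl; auto.
Qed.

Lemma small_step_plug_config (n m : synt_config) (s s' : state) :
  small_step (n, s) (m, s') -> plug_config m = plug_config n.
Proof. inversion 1; subst; try reflexivity; destruct sp; try congruence; reflexivity. Qed.

Lemma small_step_ta_step (n m : synt_config) (s s' : state) :
  small_step (n, s) (m, s') -> ta_step (stmt_to_ta (plug_config n)) (n, s) (m, s').
Proof.
  intros Hstep; destruct (small_step_synt_step_image _ _ _ _ Hstep) as [Hm ->].
  exact (ta_step_stmt_to_ta _ _ _ Hm).
Qed.

Lemma small_steps_ta_steps (p q : synt_config * state) :
  small_steps p q -> ta_steps (stmt_to_ta (plug_config (fst p))) p q.
Proof.
  intros Hsteps; apply clos_rt_rt1n in Hsteps.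
  induction Hsteps as [p | [n s] [m s'] q Hstep _ IH]; [apply rt_refl |].
  apply rt_trans with (m, s'); [apply rt_step, small_step_ta_step, Hstep |].
  simpl in IH; rewrite (small_step_plug_config _ _ _ _ Hstep) in IH; exact IH.
Qed.

Theorem theorem1 (c : stmt) (s : state) (cf' : synt_config) (s' : state) :
  small_steps ((Loc c PTop, true), s) (cf', s') ->
  exists (cfa' : synt_config) (sa' : state),
    ta_steps (stmt_to_ta c) (init_s (stmt_to_ta c), s) (cfa', sa') /\
    sim_rel (cf', s') (cfa', sa').
Proof.
  intros Hsteps; exists cf', s'; split; [| reflexivity].
  exact (small_steps_ta_steps _ _ Hsteps).
Qed.
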